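(* Let $\phi:\mathbb{R}^n\to\mathbb{R}\cup\{+\infty\}$ be proper lsc convex, $(x^-,\chi,\varepsilon)\in\mathrm{dom}\,\phi\times[0,1)\times\mathbb{R}_{++}$, and let $(x,y,\Gamma,\lambda)$, with $x,y\in\mathrm{dom}\,\phi$, $\Gamma$ proper lsc convex, $\Gamma\le\phi$, $\lambda>0$, satisfy \[ \phi(y)+\frac{\chi}{2\lambda}\|y-x^-\|^2-\min_{u}\left\{\Gamma(u)+\frac1{2\lambda}\|u-x^-\|^2\right\}\le\varepsilon,\qquad x=\mathrm{argmin}_{u}\left\{\Gamma(u)+\frac1{2\lambda}\|u-x^-\|^2\right\}. \] Define $s:=(x^--x)/\lambda$ and $\eta:=\phi(y)-\Gamma(x)-\langle s,y-x\rangle$. Then: (a) $s\in\partial\Gamma(x)$, i.e. $\Gamma(u)\ge\Gamma(x)+\langle s,u-x\rangle$ for all $u\in\mathbb{R}^n$; (b) $s\in\partial_\eta\phi(y)$ and $0\le2\lambda\eta\le2\lambda\varepsilon-\|y-x\|^2+(1-\chi)\|y-x^-\|^2$.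
   Context: For $\eta\ge0$, $\partial_\eta\phi(y)=\{v:\phi(u)\ge\phi(y)+\langle v,u-y\rangle-\eta\ \forall u\in\mathbb{R}^n\}$. *)

(* R : realType, vectors of R^n are row vectors 'rV[R]_n
   (with the product/Euclidean topology), extended-valued functions map to \bar R. *)
From HB Require Import structures.
From mathcomp Require Import all_boot all_order all_algebra.
From mathcomp Require Import all_classical all_reals all_analysis.
Import numFieldTopology.Exports numFieldNormedType.Exports.
Set Implicit Arguments. Unset Strict Implicit. Unset Printing Implicit Defensive.
Import Order.TTheory GRing.Theory Num.Theory.
Local Open Scope ring_scope.

Section Defs.
Context {R : realType} {n : nat}.
Implicit Types (u v : 'rV[R]_n) (phi : 'rV[R]_n -> \bar R).

Definition dotp u v : R := \sum_(i < n) u 0 i * v 0 i.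
Definition sqnorm u : R := dotp u u.

Definition edom phi : set 'rV[R]_n := [set x | (phi x < +oo)%E].

Definition proper_fun phi : Prop :=
  (forall x, phi x != -oo%E) /\ exists x, (phi x < +oo)%E.

Definition convex_fun phi : Prop :=
  forall (x y : 'rV[R]_n) (t : R), 0 <= t <= 1 ->
    (phi (t *: x + (1 - t) *: y)%R <= t%:E * phi x + (1 - t)%:E * phi y)%E.

Definition proper_lsc_convex phi : Prop :=
  proper_fun phi /\ lower_semicontinuous phi /\ convex_fun phi.

Definition eps_subdiff phi (eta : R) y v : Prop :=
  forall u, (phi y + (dotp v (u - y) - eta)%:E <= phi u)%E.

Definition subdiff phi y v : Prop :=
  forall u, (phi y + (dotp v (u - y))%:E <= phi u)%E.

End Defs.

(* Part (a) is the optimality condition of the proximal subproblem: moving from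
   x by t(u - x), convexity makes Gamma grow by at most t(Gamma u - Gamma x),
   while the quadratic changes by -t<x^- - x, u - x>/lambda + O(t^2); since x is
   a minimiser the sum is nonnegative, and t -> 0 gives the subgradient
   inequality.  For (b), Gamma <= phi turns the affine minorant of Gamma at x
   into an eta-affine minorant of phi at y, and the bound on eta is the
   epsilon-inequality after expanding ||y - x^-||^2 around x. *)
From HB Require Import structures.
From mathcomp Require Import all_boot all_order all_algebra.
From mathcomp Require Import all_classical all_reals all_analysis.
From mathcomp Require Import ring lra.
Set Implicit Arguments. Unset Strict Implicit. Unset Printing Implicit Defensive.
Import Order.TTheory GRing.Theory Num.Theory.
Local Open Scope ring_scope.

Section InnerProduct.
Context {R : realType} {n : nat}.
Implicit Types (u v w : 'rV[R]_n).

Lemma dotpC u v : dotp u v = dotp v u.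
Proof. by apply: eq_bigr => i _; rewrite mulrC. Qed.

Lemma dotpDl u v w : dotp (u + v) w = dotp u w + dotp v w.
Proof. by rewrite /dotp -big_split; apply: eq_bigr => i _; rewrite mxE mulrDl. Qed.

Lemma dotpNl u w : dotp (- u) w = - dotp u w.
Proof. by rewrite /dotp -sumrN; apply: eq_bigr => i _; rewrite mxE mulNr. Qed.

Lemma dotpZl (k : R) u w : dotp (k *: u) w = k * dotp u w.
Proof. by rewrite /dotp mulr_sumr; apply: eq_bigr => i _; rewrite mxE mulrA. Qed.

Lemma dotpDr u v w : dotp w (u + v) = dotp w u + dotp w v.
Proof. by rewrite dotpC dotpDl !(dotpC w). Qed.

Lemma dotpNr u w : dotp w (- u) = - dotp w u.
Proof. by rewrite dotpC dotpNl dotpC. Qed.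

Lemma dotp0r u : dotp u 0 = 0.
Proof. by rewrite /dotp big1 // => i _; rewrite mxE mulr0. Qed.

Lemma sqnormB u v : sqnorm (u - v) = sqnorm u - 2 * dotp u v + sqnorm v.
Proof. by rewrite /sqnorm dotpDl !dotpDr !dotpNl !dotpNr opprK (dotpC v u); ring. Qed.

Lemma sqnormN u : sqnorm (- u) = sqnorm u.
Proof. by rewrite /sqnorm dotpNl dotpNr opprK. Qed.

Lemma sqnormZ (k : R) u : sqnorm (k *: u) = k ^+ 2 * sqnorm u.
Proof. by rewrite /sqnorm dotpZl dotpC dotpZl mulrA -expr2. Qed.

End InnerProduct.

Lemma ge0_of_addrM_ge0 (R : realFieldType) (a c : R) :
  (forall t, 0 < t <= 1 -> 0 <= a + t * c) -> 0 <= a.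
Proof.
move=> H; apply/ler_addgt0Pr => e e0.
have c1 : 0 < `|c| + 1 by rewrite ltr_wpDl.
pose t := Num.min 1 (e / (`|c| + 1)).
have t0 : 0 < t by rewrite lt_min ltr01 divr_gt0.
have t1 : t <= 1 by rewrite ge_min lexx.
have te : t * (`|c| + 1) <= e by rewrite -ler_pdivlMr // ge_min lexx orbT.
have tc : t * c <= t * `|c| by rewrite ler_pM2l // ler_norm.
have := H t; rewrite t0 t1 => /(_ isT); nra.
Qed.

Section Subdifferentials.
Context {R : realType} {n : nat}.
Implicit Types (phi Gamma : 'rV[R]_n -> \bar R) (u v x y : 'rV[R]_n).

Lemma edom_fin_num phi x : phi x != -oo%E -> edom phi x -> phi x \is a fin_num.
Proof. by move=> xN xdom; rewrite fin_numE xN lt_eqF. Qed.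

Lemma prox_subdiff Gamma (xm x : 'rV[R]_n) (lambda : R) :
  convex_fun Gamma -> (forall u, Gamma u != -oo%E) -> Gamma x \is a fin_num ->
  0 < lambda ->
  (forall u, (Gamma x + (sqnorm (x - xm) / (2 * lambda))%:E
              <= Gamma u + (sqnorm (u - xm) / (2 * lambda))%:E)%E) ->
  subdiff Gamma x (lambda^-1 *: (xm - x)).
Proof.
move=> Gconv GN Gx lam0 Hmin u; rewrite -(fineK Gx); set gx := fine (Gamma x).
case Eu: (Gamma u) => [gu| |]; [| by rewrite leey | by move: (GN u); rewrite Eu].
rewrite -EFinD lee_fin dotpZl.
set N := sqnorm (u - x); set D := dotp (xm - x) (u - x); set X := sqnorm (xm - x).
pose k := (2 * lambda)^-1.
have k0 : 0 < k by rewrite invr_gt0 mulr_gt0.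
have lamV : lambda^-1 = 2 * k by rewrite /k invfM mulrA divff ?mul1r.
rewrite lamV -subr_ge0.
apply: (@ge0_of_addrM_ge0 _ _ (N * k)) => t /andP [t0 t1].
pose z := t *: u + (1 - t) *: x.
have zxm : z - xm = t *: (u - x) - (xm - x) by apply/rowP => i; rewrite !mxE; ring.
have Gz : (Gamma z <= (t * gu + (1 - t) * gx)%:E)%E.
  by have := Gconv u x t; rewrite (ltW t0) t1 Eu -(fineK Gx) => /(_ isT).
have := le_trans (Hmin z) (leeD2r _ Gz).
rewrite -(fineK Gx) -/gx -!EFinD lee_fin -[x - xm]opprB sqnormN -/X.
rewrite zxm sqnormB sqnormZ dotpZl -/N -/X (dotpC _ (xm - x)) -/D -/k => Hz.
have : 0 <= t * (gu - (gx + 2 * k * D) + t * (N * k)) by nra.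
by rewrite pmulr_rge0.
Qed.

Lemma subdiff_eps_subdiff phi Gamma x y v :
  (forall u, (Gamma u <= phi u)%E) -> subdiff Gamma x v ->
  Gamma x \is a fin_num -> phi y \is a fin_num ->
  eps_subdiff phi (fine (phi y) - fine (Gamma x) - dotp v (y - x)) y v.
Proof.
move=> Gphi Gv Gx phiy u; apply: le_trans (Gphi u); apply: le_trans (Gv u).
rewrite -(fineK Gx) -(fineK phiy) /= -!EFinD lee_fin.
have -> : u - x = (u - y) + (y - x) by rewrite addrA subrK.
by rewrite (dotpDr (u - y)); lra.
Qed.

Lemma eps_subdiff_ge0 phi (eta : R) y v :
  phi y \is a fin_num -> eps_subdiff phi eta y v -> 0 <= eta.
Proof.
move=> phiy /(_ y); rewrite subrr dotp0r add0r -(fineK phiy) -EFinD lee_fin.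
by rewrite gerDl oppr_le0.
Qed.

End Subdifferentials.

Lemma prox_gap_bound (R : realType) (n : nat) (xm x y : 'rV[R]_n)
    (py gx chi eps lambda : R) :
  0 < lambda ->
  py + chi / (2 * lambda) * sqnorm (y - xm)
    - (gx + sqnorm (x - xm) / (2 * lambda)) <= eps ->
  2 * lambda * (py - gx - dotp (lambda^-1 *: (xm - x)) (y - x))
    <= 2 * lambda * eps - sqnorm (y - x) + (1 - chi) * sqnorm (y - xm).
Proof.
move=> lam0 Hgap.
have Q : sqnorm (y - xm)
    = sqnorm (y - x) - 2 * dotp (xm - x) (y - x) + sqnorm (x - xm).
  by rewrite -[x - xm]opprB sqnormN (dotpC (xm - x)) -sqnormB opprB addrA subrK.
have lam2 : 0 <= 2 * lambda by rewrite mulr_ge0 // ltW.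
rewrite -subr_ge0 in Hgap; rewrite -subr_ge0 dotpZl.
move: (mulr_ge0 lam2 Hgap); rewrite Q.
by congr (0 <= _); field; rewrite lt0r_neq0.
Qed.

Theorem lemma3p3 (R : realType) (n : nat) (phi Gamma : 'rV[R]_n -> \bar R)
    (xm x y : 'rV[R]_n) (chi eps lambda : R) :
  proper_lsc_convex phi ->
  edom phi xm -> 0 <= chi < 1 -> 0 < eps ->
  edom phi x -> edom phi y ->
  proper_lsc_convex Gamma ->
  (forall u, (Gamma u <= phi u)%E) ->
  0 < lambda ->
  (* x = argmin_u { Gamma(u) + ||u - xm||^2/(2 lambda) } *)
  (forall u, (Gamma x + (sqnorm (x - xm) / (2 * lambda))%:E
              <= Gamma u + (sqnorm (u - xm) / (2 * lambda))%:E)%E) ->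
  (phi y + (chi / (2 * lambda) * sqnorm (y - xm))%:E
     - (Gamma x + (sqnorm (x - xm) / (2 * lambda))%:E) <= eps%:E)%E ->
  let s := lambda^-1 *: (xm - x) in
  let eta := fine (phi y) - fine (Gamma x) - dotp s (y - x) in
  subdiff Gamma x s /\
  (eps_subdiff phi eta y s /\
   0 <= 2 * lambda * eta /\
   2 * lambda * eta <= 2 * lambda * eps - sqnorm (y - x) + (1 - chi) * sqnorm (y - xm)).
Proof.
move=> [[phiN _] _] _ _ _ xdom ydom [[GN _] [_ Gconv]] Gphi lam0 Hmin Hgap s eta.
have Gx : Gamma x \is a fin_num.
  by apply: edom_fin_num; rewrite ?GN // /edom /= (le_lt_trans (Gphi x) xdom).
have phiy : phi y \is a fin_num by exact: edom_fin_num.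
have Gs : subdiff Gamma x s := prox_subdiff Gconv GN Gx lam0 Hmin.
have phis : eps_subdiff phi eta y s := subdiff_eps_subdiff Gphi Gs Gx phiy.
split=> //; split=> //; split.
  by rewrite pmulr_rge0 ?mulr_gt0 // (eps_subdiff_ge0 phiy phis).
apply: prox_gap_bound lam0 _.
by move: Hgap; rewrite -(fineK Gx) -(fineK phiy) -!EFinD lee_fin.
Qed.
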